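(* Let $X$ be a Hausdorff zero-dimensional topological space. Then $\mathrm{Homeo}(X)$ is fully transitive.
   Context: A space is zero-dimensional if its topology has a basis of clopen sets. Two points $x,y\in X$ are similar if there are neighbourhoods $U_x\ni x$, $U_y\ni y$ and a homeomorphism $h\colon U_x\to U_y$ with $h(x)=y$. A group $G$ of homeomorphisms of $X$ is fully transitive if for every natural number $k$ and all $k$-tuples of pairwise distinct points $(x_1,\dots,x_k)$, $(y_1,\dots,y_k)$ with $x_i$ similar to $y_i$ for each $i$, there is $g\in G$ with $g(x_i)=y_i$ for all $i$. *)

From HB Require Import structures.
From mathcomp Require Import all_boot all_algebra.
From mathcomp Require Import all_classical all_reals all_analysis.
Set Implicit Arguments. Unset Strict Implicit. Unset Printing Implicit Defensive.
Local Open Scope classical_set_scope.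

(* Zero-dimensional in the paper's sense: the clopen sets form a basis.
   (Not the library's [zero_dimensional], which is a separation property.) *)
Definition clopen_basis (X : topologicalType) : Prop :=
  forall (U : set X) (x : X), open U -> U x ->
    exists V : set X, [/\ clopen V, V x & V `<=` U].

(* h : U -> V is a homeomorphism between the subspaces U and V of X,
   represented by a function on X (only its values on U matter). *)
Definition subspace_homeo (X : topologicalType) (U V : set X) (h : X -> X) : Prop :=
  exists g : X -> X,
    [/\ {within U, continuous h}, {within V, continuous g},
        (forall x, U x -> V (h x)) /\ (forall y, V y -> U (g y)) &
        (forall x, U x -> g (h x) = x) /\ (forall y, V y -> h (g y) = y)].

Definition similar (X : topologicalType) (x y : X) : Prop :=
  exists (U V : set X) (h : X -> X),
    [/\ nbhs x U, nbhs y V, subspace_homeo U V h & h x = y].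

Definition homeomorphism (X : topologicalType) (f : X -> X) : Prop :=
  exists g : X -> X, [/\ continuous f, continuous g, cancel f g & cancel g f].

Definition Homeo_fully_transitive (X : topologicalType) : Prop :=
  forall (k : nat) (x y : 'I_k -> X),
    injective x -> injective y -> (forall i, similar (x i) (y i)) ->
    exists f : X -> X, homeomorphism f /\ (forall i, f (x i) = y i).

(* Induction on the number of points.  Given a homeomorphism f with
   f x_j = y_j for j < n, it remains to move a := f x_n to b := y_n while fixing
   the finite, hence closed, set Q of the y_j, j < n.  Transporting a local
   homeomorphism h from x_n to y_n along f, with local inverse g, choose clopen
   neighbourhoods A of a and B of b, disjoint and missing Q, inside the domains
   of h and g.  Then W := A ∩ h⁻¹ B and W' := B ∩ g⁻¹ A are disjoint clopen sets
   exchanged by h and g, and the involution equal to h on W, to g on W' and to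
   the identity elsewhere is a homeomorphism sending a to b and fixing Q. *)
From Pilot Require Import Defs.
From mathcomp Require Import all_boot all_algebra.
From mathcomp Require Import all_classical all_reals all_analysis.
Set Implicit Arguments. Unset Strict Implicit. Unset Printing Implicit Defensive.
Local Open Scope classical_set_scope.

Lemma homeomorphism_id (X : topologicalType) : homeomorphism (@id X).
Proof. by exists id; split => // x; exact: cvg_id. Qed.

Lemma homeomorphism_comp (X : topologicalType) (f g : X -> X) :
  homeomorphism f -> homeomorphism g -> homeomorphism (f \o g).
Proof.
move=> [f' [cf cf' fK f'K]] [g' [cg cg' gK g'K]].
exists (g' \o f'); split; try exact: can_comp.
- by move=> x; apply: continuous_comp; [exact: cg | exact: cf].
- by move=> x; apply: continuous_comp; [exact: cf' | exact: cg'].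
Qed.

Lemma homeomorphism_inj (X : topologicalType) (f : X -> X) :
  homeomorphism f -> injective f.
Proof. by move=> [g [_ _ fK _]]; exact: can_inj fK. Qed.

Lemma clopen_setI_preimage (X Y : topologicalType) (A : set X) (B : set Y)
    (h : X -> Y) :
  clopen A -> {in A, continuous h} -> clopen B -> clopen (A `&` h @^-1` B).
Proof.
move=> [oA cA] ch [oB cB].
have oAh := (continuous_inP h oA).1 ch.
split; first exact: oAh.
have -> : A `&` h @^-1` B = A `&` ~` (A `&` h @^-1` ~` B).
  by rewrite setCI setIUr setICr set0U preimage_setC setCK.
by apply: closedI => //; rewrite closedC; apply: oAh; exact: closed_openC.
Qed.

Lemma continuous_clopen_if (X Y : topologicalType) (W : set X) (f g : X -> Y) :
  clopen W -> {in W, continuous f} -> {in ~` W, continuous g} ->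
  continuous (fun x => if x \in W then f x else g x).
Proof.
move=> [oW cW] cf cg x; set F := fun x => _.
have piece (A : set X) (k : X -> Y) :
    open A -> {in A, continuous k} -> {in A, k =1 F} -> {in A, continuous F}.
  move=> oA + kF; rewrite -!continuous_open_subspace //.
  exact: subspace_eq_continuous.
have [Wx|nWx] := pselect (W x).
  apply: (piece W f) => //; last by rewrite in_setE.
  by move=> z zW; rewrite /F zW.
apply: (piece (~` W) g); rewrite ?in_setE //; first exact: closed_openC.
by move=> z; rewrite /F in_setC => /negbTE ->.
Qed.

Section clopen_swap.
Variables (X : topologicalType) (W W' : set X) (h g : X -> X).
Hypotheses (clopenW : clopen W) (clopenW' : clopen W').
Hypothesis disjWW' : forall x, W x -> ~ W' x.
Hypotheses (ch : {in W, continuous h}) (cg : {in W', continuous g}).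
Hypotheses (hW : forall x, W x -> W' (h x)) (gW' : forall y, W' y -> W (g y)).
Hypotheses (hK : {in W, cancel h g}) (gK : {in W', cancel g h}).

Definition clopen_swap x :=
  if x \in W then h x else if x \in W' then g x else x.

Lemma clopen_swap_in x : W x -> clopen_swap x = h x.
Proof. by rewrite /clopen_swap => /mem_set ->. Qed.

Lemma clopen_swap_out x : ~ W x -> ~ W' x -> clopen_swap x = x.
Proof.
by move=> nWx nW'x; rewrite /clopen_swap (memNset nWx) (memNset nW'x).
Qed.

Lemma clopen_swap_involutive : involutive clopen_swap.
Proof.
move=> x; have [Wx|nWx] := pselect (W x).
  have W'hx := hW Wx.
  have nWhx : ~ W (h x) by move=> /disjWW'.
  rewrite (clopen_swap_in Wx) /clopen_swap (memNset nWhx) (mem_set W'hx).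
  by rewrite hK //; exact: mem_set.
have [W'x|nW'x] := pselect (W' x); last by rewrite !clopen_swap_out.
rewrite {2}/clopen_swap (memNset nWx) (mem_set W'x) (clopen_swap_in (gW' W'x)).
by rewrite gK //; exact: mem_set.
Qed.

Lemma homeomorphism_clopen_swap : homeomorphism clopen_swap.
Proof.
have cswap : continuous clopen_swap.
  apply: continuous_clopen_if => // x _.
  by apply: continuous_clopen_if => // y _; exact: cvg_id.
by exists clopen_swap; split => //; exact: clopen_swap_involutive.
Qed.

End clopen_swap.

(* [similar] without the requirement that h maps U into V, over open
   neighbourhoods: this is all the swap needs, and it is transported along
   homeomorphisms by plain composition. *)
Definition weakly_similar (X : topologicalType) (a b : X) : Prop :=
  exists (U V : set X) (h g : X -> X),
    [/\ open_nbhs a U, open_nbhs b V,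
        {in U, continuous h} /\ {in V, continuous g},
        {in U, cancel h g} /\ {in V, cancel g h} & h a = b].

Lemma similarW (X : topologicalType) (a b : X) :
  Defs.similar a b -> weakly_similar a b.
Proof.
move=> [U [V [h [Ua Vb [g [ch cg _ [hK gK]]] hab]]]].
exists U°, V°, h, g; split => //.
- by split => //; exact: open_interior.
- by split => //; exact: open_interior.
- split; rewrite -continuous_open_subspace; try exact: open_interior.
  + exact: continuous_subspaceW (@interior_subset _ U) ch.
  + exact: continuous_subspaceW (@interior_subset _ V) cg.
- by split=> z; rewrite in_setE => /interior_subset; [exact: hK | exact: gK].
Qed.

Lemma weakly_similar_homeo (X : topologicalType) (f : X -> X) (a b : X) :
  homeomorphism f -> weakly_similar a b -> weakly_similar (f a) b.
Proof.
move=> [f' [cf cf' fK f'K]] [U [V [h [g [[oU Ua] Vb [ch cg] [hK gK] hab]]]]].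
exists (f' @^-1` U), V, (h \o f'), (f \o g); split => //.
- by split; [exact: (continuousP _).1 cf' U oU | rewrite /= fK].
- split=> [x xU|y yV]; apply: continuous_comp.
  + exact: cf'.
  + by apply: ch; rewrite in_setE; rewrite in_setE in xU.
  + exact: cg.
  + exact: cf.
- split=> [x|y yV] /=; last by rewrite fK gK.
  by rewrite in_setE => /mem_set Uf'x; rewrite hK ?f'K.
- by rewrite /= fK.
Qed.

Section full_transitivity.
Variable X : topologicalType.
Hypotheses (T1 : accessible_space X) (clopen_basisX : clopen_basis X).

Lemma weakly_similar_homeo_fix (Q : set X) (a b : X) :
  closed Q -> ~ Q a -> ~ Q b -> weakly_similar a b ->
  exists F, [/\ homeomorphism F, F a = b & forall z, Q z -> F z = z].
Proof.
move=> cQ Qa Qb; have [<- _|/eqP ab] := eqVneq a b.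
  by exists id; split => //; exact: homeomorphism_id.
move=> [U [V [h [g [[oU Ua] [oV Vb] [ch cg] [hK gK] hab]]]]].
have oCQ := closed_openC cQ.
have [A [cA Aa AU]] := clopen_basisX
  (openI (openI oU oCQ) (closed_openC (@accessible_closed_set1 _ T1 b)))
  (conj (conj Ua Qa) ab).
have [B [cB Bb BV]] := clopen_basisX
  (openI (openI oV oCQ) (closed_openC cA.2))
  (conj (conj Vb Qb) (fun Ab => (AU b Ab).2 erefl)).
have inU x : A x -> x \in U by move=> /AU [[Ux _] _]; rewrite in_setE.
have inV y : B y -> y \in V by move=> /BV [[Vy _] _]; rewrite in_setE.
pose W := A `&` h @^-1` B; pose W' := B `&` g @^-1` A.
have clopenW : clopen W.
  by apply: clopen_setI_preimage => // x; rewrite in_setE => /inU /ch.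
have clopenW' : clopen W'.
  by apply: clopen_setI_preimage => // y; rewrite in_setE => /inV /cg.
have disjWW' x : W x -> ~ W' x by move=> [Ax _] [/BV [_ nAx] _].
have hW x : W x -> W' (h x) by move=> [Ax Bhx]; split; rewrite //= hK ?inU.
have gW' y : W' y -> W (g y) by move=> [By Agy]; split; rewrite //= gK ?inV.
have hKW : {in W, cancel h g} by move=> x; rewrite in_setE => -[/inU /hK].
have gKW' : {in W', cancel g h} by move=> y; rewrite in_setE => -[/inV /gK].
have chW : {in W, continuous h} by move=> x; rewrite in_setE => -[/inU /ch].
have cgW' : {in W', continuous g} by move=> y; rewrite in_setE => -[/inV /cg].
exists (clopen_swap W W' h g); split.
- exact: homeomorphism_clopen_swap.
- by rewrite clopen_swap_in //; split; rewrite //= hab.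
- move=> z Qz; rewrite clopen_swap_out //.
    by move=> [/AU [[_ ]]].
  by move=> [/BV [[_ ]]].
Qed.

Lemma homeomorphism_interpolate (I : eqType) (x y : I -> X) :
  injective x -> injective y -> (forall i, weakly_similar (x i) (y i)) ->
  forall s : seq I,
    exists f, homeomorphism f /\ {in s, forall i, f (x i) = y i}.
Proof.
move=> xI yI xy; elim=> [|i s [f [hf fxy]]].
  by exists id; split => //; exact: homeomorphism_id.
have [si|nsi] := boolP (i \in s).
  by exists f; split => // j; rewrite inE => /predU1P [->|]; exact: fxy.
pose Q := y @` [set` s].
have cQ : closed Q.
  exact: (accessible_finite_set_closed.1 T1 _ (finite_image _ (finite_seq s))).
have Qfx : ~ Q (f (x i)).
  move=> [j /= js]; rewrite -fxy // => /(homeomorphism_inj hf) /xI ji.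
  by move: nsi; rewrite -ji js.
have Qy : ~ Q (y i) by move=> [j /= js /yI ji]; move: nsi; rewrite -ji js.
have [F [hF Fxy FQ]] :=
  weakly_similar_homeo_fix cQ Qfx Qy (weakly_similar_homeo hf (xy i)).
exists (F \o f); split; first exact: homeomorphism_comp.
move=> j; rewrite inE => /predU1P [-> //|js] /=.
by rewrite fxy // FQ //; exists j.
Qed.

End full_transitivity.

Theorem theorem20 (X : topologicalType) :
  hausdorff_space X -> clopen_basis X -> Homeo_fully_transitive X.
Proof.
move=> hX cb k x y xI yI xy.
have [f [hf fxy]] := homeomorphism_interpolate (hausdorff_accessible hX) cb
  xI yI (fun i => similarW (xy i)) (enum 'I_k).
by exists f; split => // i; apply: fxy; rewrite mem_enum.
Qed.
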